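(* Let $f,f_0\in\mathcal F$. Let $g_0$ be a density on $\mathcal X$ with $g_0(x)\le\bar g<\infty$, and let $g$ and $u$ be densities on $\mathcal X$ with $u(x)\ge\underline u>0$ for all $x$. Then $$d_h^2(f_0,f)\le\frac{4\bar g}{\underline u}\int\Big(\sqrt{f_0(y|x)u(x)}-\sqrt{f(y|x)g(x)}\Big)^2\,dy\,dx.$$
   Context: $\mathcal Y\subset\mathbb R^{d_y}$ and $\mathcal X\subset\mathbb R^{d_x}$. $\mathcal F$ is the set of Borel measurable $f:\mathcal Y\times\mathcal X\to[0,\infty)$ with $\int f(y|x)\,dy=1$ for every $x\in\mathcal X$. For $f_1,f_2\in\mathcal F$, $d_h(f_1,f_2)=\big(\int(\sqrt{f_1(y|x)}-\sqrt{f_2(y|x)})^2g_0(x)\,dy\,dx\big)^{1/2}$. All densities are with respect to Lebesgue measure. *)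

From HB Require Import structures.
From mathcomp Require Import all_boot all_order all_algebra.
From mathcomp Require Import all_classical all_reals all_analysis.
Set Implicit Arguments. Unset Strict Implicit. Unset Printing Implicit Defensive.
Import Order.TTheory GRing.Theory Num.Theory.
Local Open Scope classical_set_scope.
Local Open Scope ring_scope.

(* R^n is modelled by n.-tuple R with the product (= Borel) sigma-algebra
   generated by the coordinates (instance from measurable_structure.v). *)

Definition box (R : realType) (n : nat) (a b : n.-tuple R) : set (n.-tuple R) :=
  [set t | forall i : 'I_n, tnth a i <= tnth t i <= tnth b i].

(* mu is Lebesgue measure on (the Borel sets of) R^n: it assigns to every
   box its volume.  By uniqueness of extension this characterises it. *)
Definition is_lebesgue (R : realType) (n : nat)
    (mu : {measure set (n.-tuple R) -> \bar R}) : Prop :=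
  forall a b : n.-tuple R, (forall i : 'I_n, tnth a i <= tnth b i) ->
    mu (box a b) = (\prod_(i < n) (tnth b i - tnth a i))%:E.

Definition is_density (R : realType) (n : nat)
    (nu : {measure set (n.-tuple R) -> \bar R}) (X : set (n.-tuple R))
    (g : n.-tuple R -> R) : Prop :=
  [/\ measurable_fun X g,
      (forall x, X x -> 0 <= g x) &
      (\int[nu]_(x in X) (g x)%:E = 1)%E].

(* the class F of conditional densities f(y|x) (written f y x) *)
Definition in_F (R : realType) (dy dx : nat)
    (mu : {measure set (dy.-tuple R) -> \bar R})
    (Y : set (dy.-tuple R)) (X : set (dx.-tuple R))
    (f : dy.-tuple R -> dx.-tuple R -> R) : Prop :=
  [/\ measurable_fun (Y `*` X) (fun p => f p.1 p.2),
      (forall y x, Y y -> X x -> 0 <= f y x) &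
      (forall x, X x -> \int[mu]_(y in Y) (f y x)%:E = 1)%E].

Definition dh2 (R : realType) (dy dx : nat)
    (mu : {measure set (dy.-tuple R) -> \bar R})
    (nu : {measure set (dx.-tuple R) -> \bar R})
    (Y : set (dy.-tuple R)) (X : set (dx.-tuple R))
    (g0 : dx.-tuple R -> R) (f1 f2 : dy.-tuple R -> dx.-tuple R -> R)
    : \bar R :=
  (\int[nu]_(x in X) \int[mu]_(y in Y)
     (((Num.sqrt (f1 y x) - Num.sqrt (f2 y x)) ^+ 2) * g0 x)%:E)%E.

From HB Require Import structures.
From mathcomp Require Import all_boot all_order all_algebra.
From mathcomp Require Import all_classical all_reals all_analysis.
From mathcomp Require Import ring lra measurable_realfun.
Import Order.TTheory GRing.Theory Num.Theory.
Local Open Scope classical_set_scope.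
Local Open Scope ring_scope.

(* Fix x and put a = sqrt (f0 (.|x)), b = sqrt (f (.|x)), s = sqrt (u x),
   t = sqrt (g x), so that a and b have unit L^2 norm.  With
   lam = 2 t^2 - 2 s^2 one has the identity
     4 (s a - t b)^2 + lam a^2 - s^2 (a - b)^2 - lam b^2
       = (s^2 + 2 t^2) (a - b)^2 + 4 a b (s - t)^2 >= 0;
   integrating in y, the lam terms cancel because int a^2 = int b^2, hence
   u x * int (a - b)^2 <= 4 int (s a - t b)^2.  Integrating in x against g0
   then only needs g0 <= gbar and ulow <= u; neither the Lebesgue property of
   the measures nor anything about g beyond its values is used. *)

Lemma measurable_fun_pair1_in {d1 d2 d3} {T1 : measurableType d1}
    {T2 : measurableType d2} {T3 : measurableType d3}
    (D1 : set T1) (D2 : set T2) (h : T1 * T2 -> T3) (x2 : T2) :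
  measurable D1 -> measurable D2 -> D2 x2 ->
  measurable_fun (D1 `*` D2) h -> measurable_fun D1 (fun x1 => h (x1, x2)).
Proof.
move=> mD1 mD2 D2x2 mh.
apply: (measurable_comp (measurableX mD1 mD2) _ mh).
  by move=> _ [x1 D1x1 <-].
exact: measurable_funS (pair2_measurable x2).
Qed.

Lemma sqr_dist_weighted_ineq {R : realFieldType} (a b s t : R) :
  0 <= a -> 0 <= b ->
  s ^+ 2 * (a - b) ^+ 2 + (2 * t ^+ 2 - 2 * s ^+ 2) * b ^+ 2 <=
  4 * (s * a - t * b) ^+ 2 + (2 * t ^+ 2 - 2 * s ^+ 2) * a ^+ 2.
Proof.
move=> a0 b0; rewrite -subr_ge0.
have -> : 4 * (s * a - t * b) ^+ 2 + (2 * t ^+ 2 - 2 * s ^+ 2) * a ^+ 2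
    - (s ^+ 2 * (a - b) ^+ 2 + (2 * t ^+ 2 - 2 * s ^+ 2) * b ^+ 2)
    = (s ^+ 2 + 2 * t ^+ 2) * (a - b) ^+ 2 + 4 * (a * b) * (s - t) ^+ 2.
  by ring.
have ab0 : 0 <= a * b by exact: mulr_ge0.
have s2 := sqr_ge0 s; have t2 := sqr_ge0 t.
have := sqr_ge0 (a - b); have := sqr_ge0 (s - t); nra.
Qed.

Section nonneg_integral.
Context {d} {T : measurableType d} {R : realType}.
Variables (mu : {measure set T -> \bar R}) (D : set T).
Import HBNNSimple.

(* Unlike ge0_le_integral and ge0_integralZl_EFin these need no measurability,
   which is unknown for the outer integrand x |-> \int_Y ... in the theorem. *)
Lemma ge0_le_integral_nonmeas (f1 f2 : T -> \bar R) :
  (forall x, D x -> 0 <= f1 x)%E -> (forall x, D x -> f1 x <= f2 x)%E ->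
  (\int[mu]_(x in D) f1 x <= \int[mu]_(x in D) f2 x)%E.
Proof.
move=> f10 f12.
have f20 x : D x -> (0 <= f2 x)%E by move=> Dx; exact: le_trans (f10 x Dx) (f12 x Dx).
rewrite !ge0_integralE//; apply: ge_ereal_sup => _ [h hle <-].
apply: ereal_sup_ubound; exists h => // y; apply: (le_trans (hle y)).
rewrite /patch; case: ifP => // /[!inE] Dy; exact: f12.
Qed.

Lemma ge0_integralZl_le (f : T -> \bar R) (k : R) : 0 <= k ->
  (forall x, D x -> 0 <= f x)%E ->
  (\int[mu]_(x in D) (k%:E * f x) <= k%:E * \int[mu]_(x in D) f x)%E.
Proof.
move=> k0 f0; have [->|kn0] := eqVneq k 0.
  by rewrite mul0e integral0_eq// => x _; rewrite mul0e.
have kf0 x : D x -> (0 <= k%:E * f x)%E by move=> Dx; rewrite mule_ge0 ?f0.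
rewrite !ge0_integralE//; apply: ge_ereal_sup => _ [h hle <-].
have ki0 : 0 <= k^-1 by rewrite invr_ge0.
pose h' := scale_nnsfun h ki0.
have -> : sintegral mu h = (k%:E * sintegral mu h')%E.
  have -> : sintegral mu h' = sintegral mu (cst k^-1 \* h)%R.
    exact: eq_sintegral.
  by rewrite sintegralrM muleA -EFinM mulfV// mul1e.
apply: lee_wpmul2l; first by rewrite lee_fin.
apply: ereal_sup_ubound; exists h' => // y.
have := hle y; rewrite /patch; case: ifP => _ hy; last first.
  change (point : \bar R) with ((0 : R)%:E) in hy |- *.
  by rewrite lee_fin in hy; rewrite /h' /= lee_fin mulr_ge0_le0.
apply: (@le_trans _ _ (k^-1%:E * (k%:E * f y))%E).
  by rewrite /h' /= EFinM lee_wpmul2l// lee_fin.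
by rewrite muleA -EFinM mulVf// mul1e.
Qed.

Hypothesis mD : measurable D.

Lemma ge0_integralDZ_EFin (F G : T -> R) (lam r : R) :
  measurable_fun D F -> measurable_fun D G ->
  (forall x, D x -> 0 <= F x) -> (forall x, D x -> 0 <= G x) -> 0 <= lam ->
  (\int[mu]_(x in D) (G x)%:E = r%:E)%E ->
  (\int[mu]_(x in D) (F x + lam * G x)%:E =
   \int[mu]_(x in D) (F x)%:E + (lam * r)%:E)%E.
Proof.
move=> mF mG F0 G0 lam0 intG.
under eq_integral do rewrite EFinD EFinM.
rewrite ge0_integralD //.
- by rewrite ge0_integralZl_EFin ?intG -?EFinM //; exact/measurable_EFinP.
- exact/measurable_EFinP.
- by move=> x Dx; rewrite -EFinM lee_fin mulr_ge0 ?G0.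
- by apply/measurable_EFinP; apply: measurable_funM => //; exact: measurable_cst.
Qed.

Lemma le_integral_cancel (P Q A B : T -> R) (lam r : R) :
  measurable_fun D P -> measurable_fun D Q ->
  measurable_fun D A -> measurable_fun D B ->
  (forall x, D x -> 0 <= P x) -> (forall x, D x -> 0 <= Q x) ->
  (forall x, D x -> 0 <= A x) -> (forall x, D x -> 0 <= B x) -> 0 <= lam ->
  (\int[mu]_(x in D) (A x)%:E = r%:E)%E ->
  (\int[mu]_(x in D) (B x)%:E = r%:E)%E ->
  (forall x, D x -> P x + lam * A x <= Q x + lam * B x) ->
  (\int[mu]_(x in D) (P x)%:E <= \int[mu]_(x in D) (Q x)%:E)%E.
Proof.
move=> mP mQ mA mB P0 Q0 A0 B0 lam0 intA intB PQ.
rewrite -(@leeD2rE _ (lam * r)%:E) // -(@ge0_integralDZ_EFin P A lam r mP mA) //.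
rewrite -(@ge0_integralDZ_EFin Q B lam r mQ mB) //.
apply: ge0_le_integral => //.
- by move=> x Dx; rewrite lee_fin addr_ge0 ?mulr_ge0 ?P0 ?A0.
- apply/measurable_EFinP; apply: measurable_funD => //.
  by apply: measurable_funM => //; exact: measurable_cst.
- apply/measurable_EFinP; apply: measurable_funD => //.
  by apply: measurable_funM => //; exact: measurable_cst.
Qed.

Lemma integral_sqr_dist_le_scaled (a b : T -> R) (s t r : R) :
  measurable_fun D a -> measurable_fun D b ->
  (forall x, D x -> 0 <= a x) -> (forall x, D x -> 0 <= b x) ->
  (\int[mu]_(x in D) (a x ^+ 2)%:E = r%:E)%E ->
  (\int[mu]_(x in D) (b x ^+ 2)%:E = r%:E)%E ->
  ((s ^+ 2)%:E * \int[mu]_(x in D) ((a x - b x) ^+ 2)%:E <=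
   4%:E * \int[mu]_(x in D) ((s * a x - t * b x) ^+ 2)%:E)%E.
Proof.
move=> ma mb a0 b0 inta intb.
have ma2 : measurable_fun D (fun x => a x ^+ 2) by exact: measurable_funX.
have mb2 : measurable_fun D (fun x => b x ^+ 2) by exact: measurable_funX.
have mdiff : measurable_fun D (fun x => (a x - b x) ^+ 2).
  exact/measurable_funX/measurable_funB.
have mdiff_st : measurable_fun D (fun x => (s * a x - t * b x) ^+ 2).
  by apply/measurable_funX/measurable_funB; apply: measurable_funM => //;
    exact: measurable_cst.
have mP : measurable_fun D (fun x => s ^+ 2 * (a x - b x) ^+ 2).
  exact: measurable_funM (measurable_cst _) mdiff.
have mQ : measurable_fun D (fun x => 4 * (s * a x - t * b x) ^+ 2).
  exact: measurable_funM (measurable_cst _) mdiff_st.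
have sq0 (h : T -> R) x : D x -> (0 <= (h x ^+ 2)%:E)%E.
  by move=> _; rewrite lee_fin sqr_ge0.
rewrite -(ge0_integralZl_EFin mu mD (sq0 _) ((measurable_EFinP _ _).2 mdiff) (sqr_ge0 s)).
rewrite -(ge0_integralZl_EFin mu mD (sq0 _) ((measurable_EFinP _ _).2 mdiff_st)
  (ler0n R 4)).
under eq_integral do rewrite -EFinM.
under [in X in (_ <= X)%E]eq_integral do rewrite -EFinM.
have P0 x : D x -> 0 <= s ^+ 2 * (a x - b x) ^+ 2 by rewrite mulr_ge0 ?sqr_ge0.
have Q0 x : D x -> 0 <= 4 * (s * a x - t * b x) ^+ 2 by rewrite mulr_ge0 ?sqr_ge0.
have sqr0 (h : T -> R) x : D x -> 0 <= h x ^+ 2 by rewrite sqr_ge0.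
have ineq x (Dx : D x) := @sqr_dist_weighted_ineq _ _ _ s t (a0 x Dx) (b0 x Dx).
have [lam0|lam0] := leP 0 (2 * t ^+ 2 - 2 * s ^+ 2).
  exact: (@le_integral_cancel _ _ _ _ _ _ mP mQ mb2 ma2 P0 Q0 (sqr0 b) (sqr0 a)
    lam0 intb inta ineq).
apply: (@le_integral_cancel _ _ _ _ (2 * s ^+ 2 - 2 * t ^+ 2) _ mP mQ ma2 mb2
  P0 Q0 (sqr0 a) (sqr0 b) _ inta intb); first lra.
by move=> x Dx; have := ineq x Dx; lra.
Qed.

End nonneg_integral.

Lemma measurable_fun_sqrt {d} {T : measurableType d} {R : realType}
    (D : set T) (h : T -> R) :
  measurable_fun D h -> measurable_fun D (fun x => Num.sqrt (h x)).
Proof.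
by apply: measurableT_comp; exact: continuous_measurable_fun (@sqrt_continuous R).
Qed.

Lemma hellinger_scaled_le {d} {T : measurableType d} {R : realType}
    (mu : {measure set T -> \bar R}) (D : set T) (f0 f : T -> R) (v w : R) :
  measurable D -> measurable_fun D f0 -> measurable_fun D f ->
  (forall y, D y -> 0 <= f0 y) -> (forall y, D y -> 0 <= f y) ->
  (\int[mu]_(y in D) (f0 y)%:E = 1)%E -> (\int[mu]_(y in D) (f y)%:E = 1)%E ->
  0 <= v ->
  (v%:E * \int[mu]_(y in D) ((Num.sqrt (f0 y) - Num.sqrt (f y)) ^+ 2)%:E <=
   4%:E * \int[mu]_(y in D)
     ((Num.sqrt (f0 y * v) - Num.sqrt (f y * w)) ^+ 2)%:E)%E.
Proof.
move=> mD mf0 mf f0_ge0 f_ge0 int_f0 int_f v0.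
have int_sqr (h : T -> R) : (forall y, D y -> 0 <= h y) ->
    (\int[mu]_(y in D) (Num.sqrt (h y) ^+ 2)%:E = \int[mu]_(y in D) (h y)%:E)%E.
  by move=> h0; apply: eq_integral => y /[!inE] Dy; rewrite sqr_sqrtr ?h0.
have -> : (\int[mu]_(y in D)
    ((Num.sqrt (f0 y * v) - Num.sqrt (f y * w)) ^+ 2)%:E =
  \int[mu]_(y in D) ((Num.sqrt v * Num.sqrt (f0 y)
                      - Num.sqrt w * Num.sqrt (f y)) ^+ 2)%:E)%E.
  apply: eq_integral => y /[!inE] Dy.
  by rewrite !sqrtrM ?f0_ge0 ?f_ge0 // (mulrC (Num.sqrt (f0 y))) (mulrC (Num.sqrt (f y))).
rewrite -{1}(sqr_sqrtr v0).
apply: (integral_sqr_dist_le_scaled mu _ mD (fun y => Num.sqrt (f0 y))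
  (fun y => Num.sqrt (f y)) _ _ 1).
- exact: measurable_fun_sqrt.
- exact: measurable_fun_sqrt.
- by move=> y _; exact: sqrtr_ge0.
- by move=> y _; exact: sqrtr_ge0.
- by rewrite int_sqr.
- by rewrite int_sqr.
Qed.

Lemma lee_reweight {R : realType} (K J : \bar R) (k k' c c' m : R) :
  (0 <= K)%E -> 0 <= k <= c -> 0 < c' <= k' ->
  (k'%:E * K <= m%:E * J)%E -> (k%:E * K <= (m * c / c')%:E * J)%E.
Proof.
move=> K0 /andP[k0 kc] /andP[c'0 c'k'] k'KJ.
have c0 : 0 <= c by exact: le_trans kc.
have cc'0 : 0 <= c / c' by rewrite divr_ge0 // ltW.
apply: (@le_trans _ _ (c%:E * K)%E); first by rewrite lee_wpmul2r // lee_fin.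
have -> : (c%:E * K = (c / c')%:E * (c'%:E * K))%E.
  by rewrite muleA -EFinM mulrVK // unitfE gt_eqF.
apply: (@le_trans _ _ ((c / c')%:E * (k'%:E * K))%E).
  by rewrite lee_wpmul2l ?lee_fin // lee_wpmul2r // lee_fin.
apply: (@le_trans _ _ ((c / c')%:E * (m%:E * J))%E).
  by rewrite lee_wpmul2l ?lee_fin.
by rewrite muleA -EFinM mulrC mulrA.
Qed.

Theorem lemma1 (R : realType) (dy dx : nat)
  (mu : {measure set (dy.-tuple R) -> \bar R})
  (nu : {measure set (dx.-tuple R) -> \bar R})
  (Hmu : is_lebesgue mu) (Hnu : is_lebesgue nu)
  (Y : set (dy.-tuple R)) (X : set (dx.-tuple R))
  (mY : measurable Y) (mX : measurable X)
  (f f0 : dy.-tuple R -> dx.-tuple R -> R)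
  (Hf : in_F mu Y X f) (Hf0 : in_F mu Y X f0)
  (g0 g u : dx.-tuple R -> R) (gbar ulow : R)
  (Hg0 : is_density nu X g0) (Hg0b : forall x, X x -> g0 x <= gbar)
  (Hg : is_density nu X g) (Hu : is_density nu X u)
  (Hulow : 0 < ulow) (Hub : forall x, X x -> ulow <= u x) :
  (dh2 mu nu Y X g0 f0 f <=
   (4 * gbar / ulow)%:E *
   \int[nu]_(x in X) \int[mu]_(y in Y)
      ((Num.sqrt (f0 y x * u x) - Num.sqrt (f y x * g x)) ^+ 2)%:E)%E.
Proof.
case: Hf => mf f_ge0 int_f; case: Hf0 => mf0 f0_ge0 int_f0.
case: Hg0 => _ g0_ge0 _; case: Hu => _ u_ge0 _.
have [gbar_lt0|gbar_ge0] := ltP gbar 0.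
  suff -> : X = set0 by rewrite /dh2 !integral_set0 mule0.
  by apply/seteqP; split=> // x Xx; have := g0_ge0 x Xx; have := Hg0b x Xx; lra.
have c_ge0 : 0 <= 4 * gbar / ulow by rewrite divr_ge0 ?mulr_ge0 // ltW.
rewrite /dh2; apply: le_trans _ (ge0_integralZl_le nu X _ _ c_ge0 _); last first.
  by move=> x Xx; apply: integral_ge0 => y Yy; rewrite lee_fin sqr_ge0.
apply: ge0_le_integral_nonmeas => x Xx.
  by apply: integral_ge0 => y Yy; rewrite lee_fin mulr_ge0 ?sqr_ge0 ?g0_ge0.
under eq_integral do rewrite mulrC EFinM.
rewrite ge0_integralZl_EFin ?g0_ge0 //; first last.
- apply/measurable_EFinP/measurable_funX/measurable_funB; apply: measurable_fun_sqrt.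
  + exact: measurable_fun_pair1_in mY mX Xx mf0.
  + exact: measurable_fun_pair1_in mY mX Xx mf.
- by move=> y _; rewrite lee_fin sqr_ge0.
apply: (lee_reweight _ _ _ (u x)).
- by apply: integral_ge0 => y _; rewrite lee_fin sqr_ge0.
- by rewrite g0_ge0 ?Hg0b.
- by rewrite Hulow Hub.
apply: (hellinger_scaled_le mu Y (fun y => f0 y x) (fun y => f y x));
  rewrite ?u_ge0 ?int_f0 ?int_f //.
- exact: measurable_fun_pair1_in mY mX Xx mf0.
- exact: measurable_fun_pair1_in mY mX Xx mf.
- by move=> y Yy; exact: f0_ge0.
- by move=> y Yy; exact: f_ge0.
Qed.
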